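(* Let $\bar t>0$, $I=(0,\bar t)$, let $\gamma_1,\gamma_2\in\mathrm{Lip}(I)$ (extended continuously to $\bar I$) with $\gamma_1<0<\gamma_2$ on $I$, $\gamma_1(0)=\gamma_1(\bar t)=\gamma_2(0)=\gamma_2(\bar t)=0$, $\gamma_1$ convex and $\gamma_2$ concave, and let $D=\{(y,t)\in\mathbb W: t\in I,\ \gamma_1(t)<y<\gamma_2(t)\}$. Let $\phi\in C(\partial D)$ with $\phi_1,\phi_2\in\mathrm{Lip}(I)$, and assume $\zeta<(\sqrt{721}-25)/48$. Let $u\in\mathrm{Lip}(D)$ be a function with $u=\phi$ on $\partial D$ and $S_u=R_\phi$. Then there exist an open set $D^r\subset\mathbb W$ and $u^r\in\mathrm{Lip}_{loc}(D^r)$ such that $S_u=S^r_{u^r}$.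
   Context: $\mathbb H$ is $\mathbb R^3$ with product $(x,y,t)\cdot(\xi,\eta,\tau)=(x+\xi,y+\eta,t+\tau+2(y\xi-x\eta))$; $X=\partial_x+2y\partial_t$, $Y=\partial_y-2x\partial_t$, $H_p=\mathrm{span}\{X(p),Y(p)\}$. $\mathbb W=\{x=0\}$ with coordinates $(y,t)$. Left intrinsic graph of $u:D\to\mathbb R$: $S_u=\{(u(y,t),y,t+2yu(y,t)):(y,t)\in D\}$. Right intrinsic graph of $v:D^r\to\mathbb R$: $S^r_v=\{(v(y,t),y,t-2yv(y,t)):(y,t)\in D^r\}$. Set $\phi_i(s)=\phi(\gamma_i(s),s)$, $\|\gamma\|_\infty=\max_i\|\gamma_i\|_\infty$, $\mathrm{Lip}(\gamma)=\max_i\mathrm{Lip}(\gamma_i)$, $\|\phi\|_\infty=\max_i\|\phi_i\|_\infty$, $\mathrm{Lip}(\phi)=\max_i\mathrm{Lip}(\phi_i)$, $\zeta=4(\|\gamma\|_\infty+\mathrm{Lip}(\gamma))(\|\phi\|_\infty+\mathrm{Lip}(\phi))$. Let $p_i(s)=(\phi_i(s),\gamma_i(s),s+2\gamma_i(s)\phi_i(s))$, $s\in\bar I$. When $\zeta<1$, for each $s\in\bar I$ there is a unique $\lambda(s)\in\bar I$ with $p_2(\lambda(s))-p_1(s)\in H_{p_1(s)}$ (equivalently $\lambda(s)-s+2(\gamma_2(\lambda(s))-\gamma_1(s))(\phi_2(\lambda(s))+\phi_1(s))=0$). Then $\rho(h,s)=(1-h)p_1(s)+h\,p_2(\lambda(s))$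 for $(h,s)\in Q=(0,1)\times I$, and $R_\phi:=\rho(Q)$ is the horizontally ruled surface spanned by $\phi$. *)

From Stdlib Require Import Reals.
Open Scope R_scope.

(* Points of W = {x = 0} are pairs (y,t), written as two real arguments.
   Points of the Heisenberg group H = R^3 are triples (x,y,t). *)

Definition dist2 (y t y' t' : R) : R := sqrt ((y - y')^2 + (t - t')^2).

Definition inI (tb s : R) : Prop := 0 < s < tb.
Definition inIbar (tb s : R) : Prop := 0 <= s <= tb.

Definition lip_on_I (tb : R) (f : R -> R) : Prop :=
  exists L, forall s s', inI tb s -> inI tb s' -> Rabs (f s - f s') <= L * Rabs (s - s').

(* f is continuous on the closed interval [0, tb] (continuous extension to bar I) *)
Definition cont_on_Ibar (tb : R) (f : R -> R) : Prop :=
  forall s, inIbar tb s -> forall eps, 0 < eps -> exists del, 0 < del /\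
    forall s', inIbar tb s' -> Rabs (s' - s) < del -> Rabs (f s' - f s) < eps.

Definition convex_on_Ibar (tb : R) (f : R -> R) : Prop :=
  forall a b th, inIbar tb a -> inIbar tb b -> 0 <= th <= 1 ->
    f (th * a + (1 - th) * b) <= th * f a + (1 - th) * f b.

Definition concave_on_Ibar (tb : R) (f : R -> R) : Prop :=
  forall a b th, inIbar tb a -> inIbar tb b -> 0 <= th <= 1 ->
    th * f a + (1 - th) * f b <= f (th * a + (1 - th) * b).

Definition Dom (tb : R) (g1 g2 : R -> R) (y t : R) : Prop :=
  inI tb t /\ g1 t < y < g2 t.

Definition in_closure (A : R -> R -> Prop) (y t : R) : Prop :=
  forall eps, 0 < eps -> exists y' t', A y' t' /\ dist2 y t y' t' < eps.
Definition in_interior (A : R -> R -> Prop) (y t : R) : Prop :=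
  exists eps, 0 < eps /\ forall y' t', dist2 y t y' t' < eps -> A y' t'.
Definition in_boundary (A : R -> R -> Prop) (y t : R) : Prop :=
  in_closure A y t /\ ~ in_interior A y t.
Definition open_W (A : R -> R -> Prop) : Prop :=
  forall y t, A y t -> in_interior A y t.

Definition cont_on_boundary (A : R -> R -> Prop) (phi : R -> R -> R) : Prop :=
  forall y t, in_boundary A y t -> forall eps, 0 < eps -> exists del, 0 < del /\
    forall y' t', in_boundary A y' t' -> dist2 y t y' t' < del ->
      Rabs (phi y' t' - phi y t) < eps.

Definition lip_on (A : R -> R -> Prop) (u : R -> R -> R) : Prop :=
  exists L, forall y t y' t', A y t -> A y' t' ->
    Rabs (u y t - u y' t') <= L * dist2 y t y' t'.

Definition lip_loc (A : R -> R -> Prop) (u : R -> R -> R) : Prop :=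
  forall y0 t0, A y0 t0 -> exists r L, 0 < r /\
    forall y t y' t', A y t -> A y' t' -> dist2 y0 t0 y t < r -> dist2 y0 t0 y' t' < r ->
      Rabs (u y t - u y' t') <= L * dist2 y t y' t'.

(* "u = phi on the boundary of A": the (continuous) extension of u to the
   closure of A agrees with phi on the boundary, i.e. u(q) -> phi(p) as q -> p, q in A. *)
Definition boundary_values (A : R -> R -> Prop) (u phi : R -> R -> R) : Prop :=
  forall y t, in_boundary A y t -> forall eps, 0 < eps -> exists del, 0 < del /\
    forall y' t', A y' t' -> dist2 y t y' t' < del -> Rabs (u y' t' - phi y t) < eps.

Definition is_supnorm_I (tb : R) (f : R -> R) (m : R) : Prop :=
  is_lub (fun z => exists s, inI tb s /\ z = Rabs (f s)) m.
Definition is_lipconst_I (tb : R) (f : R -> R) (L : R) : Prop :=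
  is_lub (fun z => exists s s', inI tb s /\ inI tb s' /\ s <> s' /\
                     z = Rabs (f s - f s') / Rabs (s - s')) L.

Definition zeta_lt (tb : R) (g1 g2 : R -> R) (phi : R -> R -> R) (c : R) : Prop :=
  exists ng1 ng2 lg1 lg2 np1 np2 lp1 lp2 : R,
    is_supnorm_I tb g1 ng1 /\ is_supnorm_I tb g2 ng2 /\
    is_lipconst_I tb g1 lg1 /\ is_lipconst_I tb g2 lg2 /\
    is_supnorm_I tb (fun s => phi (g1 s) s) np1 /\
    is_supnorm_I tb (fun s => phi (g2 s) s) np2 /\
    is_lipconst_I tb (fun s => phi (g1 s) s) lp1 /\
    is_lipconst_I tb (fun s => phi (g2 s) s) lp2 /\
    4 * (Rmax ng1 ng2 + Rmax lg1 lg2) * (Rmax np1 np2 + Rmax lp1 lp2) < c.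

Definition pt3 : Type := (R * R * R)%type.

Definition S_left (A : R -> R -> Prop) (u : R -> R -> R) (q : pt3) : Prop :=
  exists y t, A y t /\ q = (u y t, y, t + 2 * y * u y t).

Definition S_right (A : R -> R -> Prop) (v : R -> R -> R) (q : pt3) : Prop :=
  exists y t, A y t /\ q = (v y t, y, t - 2 * y * v y t).

(* H_p = span{X(p), Y(p)}, X = (1,0,2y), Y = (0,1,-2x) at p = (x,y,t):
   w = (a,b,c) in H_p iff c = 2 y a - 2 x b. *)
Definition in_Hp (p w : pt3) : Prop :=
  let '(x, y, _) := p in let '(a, b, c) := w in c = 2 * y * a - 2 * x * b.

Definition sub3 (p q : pt3) : pt3 :=
  let '(x, y, t) := p in let '(x', y', t') := q in (x - x', y - y', t - t').

Definition comb3 (h : R) (p q : pt3) : pt3 :=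
  let '(x, y, t) := p in let '(x', y', t') := q in
  ((1 - h) * x + h * x', (1 - h) * y + h * y', (1 - h) * t + h * t').

Definition p_i (g : R -> R) (phi : R -> R -> R) (s : R) : pt3 :=
  (phi (g s) s, g s, s + 2 * g s * phi (g s) s).

(* lambda(s) is characterized as the (unique, when zeta < 1) point of bar I
   with p_2(lambda(s)) - p_1(s) in H_{p_1(s)}. *)
Definition is_lambda (tb : R) (g1 g2 : R -> R) (phi : R -> R -> R) (s l : R) : Prop :=
  inIbar tb l /\ in_Hp (p_i g1 phi s) (sub3 (p_i g2 phi l) (p_i g1 phi s)).

Definition R_phi (tb : R) (g1 g2 : R -> R) (phi : R -> R -> R) (q : pt3) : Prop :=
  exists h s l, 0 < h < 1 /\ inI tb s /\ is_lambda tb g1 g2 phi s l /\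
    q = comb3 h (p_i g1 phi s) (p_i g2 phi l).

From Stdlib Require Import Reals Lra Psatz ClassicalEpsilon.
Open Scope R_scope.

(* A point (u, y, t + 2 y u) of the left graph S_u is the point (u, y, tau - 2 y u) of a right
   graph as soon as tau = t + 4 y u(y, t).  Hence S_u is the right graph of u^r = u o Phi^-1 over
   D^r = Phi(D), Phi(y, t) = (y, t + 4 y u(y, t)), provided t |-> t + 4 y u(y, t) expands
   distances by a fixed factor on every horizontal slice of D: then D^r is open by the
   intermediate value theorem and u^r is locally Lipschitz.
   The expansion comes from the ruling.  A point of S_u = R_phi lies on the horizontal segment
   from p_1(s) to p_2(lambda(s)), which gives t = s - 2 (y - gamma_1(s)) (phi_1(s) + u) and
   t = lambda - 2 (y - gamma_2(lambda)) (phi_2(lambda) + u).  Comparing two points of one slice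
   y = const, the variations of s, lambda and t agree up to relative errors of order zeta, and
   zeta < 1/25 already forces the variation of t + 4 y u to be at least half that of t. *)

Lemma Rabs_le_inv x a : Rabs x <= a -> -a <= x <= a.
Proof.
  intros H. pose proof (Rle_abs x). pose proof (Rle_abs (-x)).
  rewrite Rabs_Ropp in *. lra.
Qed.

Lemma Rabs_triang3 x y z : Rabs (x + y + z) <= Rabs x + Rabs y + Rabs z.
Proof. pose proof (Rabs_triang (x + y) z). pose proof (Rabs_triang x y). lra. Qed.

Lemma Rabs_y_le_dist2 y t y' t' : Rabs (y - y') <= dist2 y t y' t'.
Proof.
  unfold dist2. rewrite <- sqrt_Rsqr_abs. apply sqrt_le_1_alt.
  unfold Rsqr. pose proof (pow2_ge_0 (t - t')). simpl. lra.
Qed.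

Lemma Rabs_t_le_dist2 y t y' t' : Rabs (t - t') <= dist2 y t y' t'.
Proof.
  unfold dist2. rewrite <- sqrt_Rsqr_abs. apply sqrt_le_1_alt.
  unfold Rsqr. pose proof (pow2_ge_0 (y - y')). simpl. lra.
Qed.

Lemma dist2_le_sum y t y' t' : dist2 y t y' t' <= Rabs (y - y') + Rabs (t - t').
Proof.
  unfold dist2. pose proof (Rabs_pos (y - y')). pose proof (Rabs_pos (t - t')).
  rewrite <- (sqrt_Rsqr (Rabs (y - y') + Rabs (t - t'))) by lra.
  apply sqrt_le_1_alt. rewrite <- (pow2_abs (y - y')), <- (pow2_abs (t - t')).
  unfold Rsqr. nra.
Qed.

Lemma dist2_same_t y y' t : dist2 y t y' t = Rabs (y - y').
Proof.
  unfold dist2. replace ((y - y')^2 + (t - t)^2) with (Rsqr (y - y')) by (unfold Rsqr; ring).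
  apply sqrt_Rsqr_abs.
Qed.

Lemma dist2_ge0 y t y' t' : 0 <= dist2 y t y' t'.
Proof. apply sqrt_pos. Qed.

Lemma dist2_sym y t y' t' : dist2 y t y' t' = dist2 y' t' y t.
Proof. unfold dist2. f_equal. ring. Qed.

Lemma supnorm_le tb f n N : is_supnorm_I tb f n -> n <= N ->
  forall s, inI tb s -> Rabs (f s) <= N.
Proof. intros [Hub _] HN s Hs. enough (Rabs (f s) <= n) by lra. apply Hub. eauto. Qed.

Lemma supnorm_ge0 tb f n : 0 < tb -> is_supnorm_I tb f n -> 0 <= n.
Proof.
  intros Htb Hn. apply Rle_trans with (Rabs (f (tb/2))); [apply Rabs_pos|].
  apply (supnorm_le tb f n n); [auto | lra | unfold inI; lra].
Qed.

Lemma lipconst_le tb f K K' : is_lipconst_I tb f K -> K <= K' ->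
  forall s s', inI tb s -> inI tb s' -> Rabs (f s - f s') <= K' * Rabs (s - s').
Proof.
  intros [Hub _] HK s s' Hs Hs'. destruct (Req_dec s s') as [<-|Hne].
  - rewrite !Rminus_diag, Rabs_R0. lra.
  - assert (Hd : 0 < Rabs (s - s')) by (apply Rabs_pos_lt; lra).
    assert (Hq : Rabs (f s - f s') / Rabs (s - s') <= K) by (apply Hub; exists s, s'; auto).
    apply (Rmult_le_compat_r (Rabs (s - s'))) in Hq; [|lra].
    unfold Rdiv in Hq. rewrite Rmult_assoc, Rinv_l in Hq by lra. nra.
Qed.

Lemma lipconst_ge0 tb f K : 0 < tb -> is_lipconst_I tb f K -> 0 <= K.
Proof.
  intros Htb [Hub _].
  assert (Hq : Rabs (f (tb/3) - f (2*tb/3)) / Rabs (tb/3 - 2*tb/3) <= K)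
    by (apply Hub; exists (tb/3), (2*tb/3); unfold inI; repeat split; lra).
  eapply Rle_trans; [|exact Hq]. apply Rmult_le_pos; [apply Rabs_pos|]. left. apply Rinv_0_lt_compat, Rabs_pos_lt. lra.
Qed.

Lemma inI_dense tb a d : 0 < tb -> inIbar tb a -> 0 < d ->
  exists a', inI tb a' /\ Rabs (a' - a) < d.
Proof.
  intros Htb [Ha0 Hatb] Hd. set (th := Rmin (1/2) (d/tb)).
  assert (Hth : 0 < th <= 1/2) by (split; [apply Rmin_glb_lt; [lra|apply Rdiv_lt_0_compat; lra] | apply Rmin_l]).
  assert (Hthd : th * tb <= d).
  { apply Rle_trans with (d / tb * tb); [apply Rmult_le_compat_r; [lra|apply Rmin_r]|].
    right. field. lra. }
  exists (a + th * (tb/2 - a)). split; [unfold inI; split; nra|].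
  replace (a + th * (tb/2 - a) - a) with (th * (tb/2 - a)) by ring.
  rewrite Rabs_mult, Rabs_pos_eq by lra.
  assert (Rabs (tb/2 - a) <= tb/2) by (apply Rabs_le; lra). nra.
Qed.

Lemma cont_on_Ibar_approx tb f a e : 0 < tb -> cont_on_Ibar tb f -> inIbar tb a -> 0 < e ->
  exists a', inI tb a' /\ Rabs (a' - a) < e /\ Rabs (f a' - f a) < e.
Proof.
  intros Htb Hf Ha He. destruct (Hf a Ha e He) as [d [Hd Hfd]].
  destruct (inI_dense tb a (Rmin d e) Htb Ha) as [a' [Ha' [Had Hae]%Rmin_Rgt_l]];
    [apply Rmin_glb_lt; lra|].
  exists a'. split; [|split]; auto.
  apply Hfd; auto. destruct Ha'; unfold inIbar; lra.
Qed.

Lemma cont_bound_closure tb f n : 0 < tb -> cont_on_Ibar tb f ->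
  (forall s, inI tb s -> Rabs (f s) <= n) -> forall s, inIbar tb s -> Rabs (f s) <= n.
Proof.
  intros Htb Hf Hn a Ha. apply Rle_plus_epsilon. intros eps Heps.
  destruct (cont_on_Ibar_approx tb f a eps Htb Hf Ha Heps) as [a' [Ha' [_ Hfa]]].
  pose proof (Hn a' Ha'). pose proof (Rabs_triang (f a') (f a - f a')).
  rewrite Rabs_minus_sym in Hfa. replace (f a' + (f a - f a')) with (f a) in * by ring. lra.
Qed.

Lemma cont_lip_closure tb f K : 0 < tb -> cont_on_Ibar tb f -> 0 <= K ->
  (forall s s', inI tb s -> inI tb s' -> Rabs (f s - f s') <= K * Rabs (s - s')) ->
  forall s s', inIbar tb s -> inIbar tb s' -> Rabs (f s - f s') <= K * Rabs (s - s').
Proof.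
  intros Htb Hf HK HfK a b Ha Hb. apply Rle_plus_epsilon. intros eps Heps.
  set (e := eps / (2 + 2*K)).
  assert (He : 0 < e) by (apply Rdiv_lt_0_compat; lra).
  assert (Heps_e : e * (2 + 2*K) = eps) by (unfold e; field; lra).
  destruct (cont_on_Ibar_approx tb f a e Htb Hf Ha He) as [a' [Ha' [Haa' Hfa]]].
  destruct (cont_on_Ibar_approx tb f b e Htb Hf Hb He) as [b' [Hb' [Hbb' Hfb]]].
  pose proof (HfK a' b' Ha' Hb').
  assert (Hab : Rabs (a' - b') <= e + Rabs (a - b) + e).
  { pose proof (Rabs_triang3 (a' - a) (a - b) (b - b')).
    rewrite (Rabs_minus_sym b) in *. replace (a' - a + (a - b) + (b - b')) with (a' - b') in * by ring. lra. }
  replace (f a - f b) with ((f a - f a') + (f a' - f b') + (f b' - f b)) by ring.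
  pose proof (Rabs_triang3 (f a - f a') (f a' - f b') (f b' - f b)).
  rewrite (Rabs_minus_sym (f a)) in *. nra.
Qed.

Lemma cont_on_Ibar_interior tb f t e : cont_on_Ibar tb f -> inI tb t -> 0 < e ->
  exists d, 0 < d /\ forall t', Rabs (t' - t) < d -> inI tb t' /\ Rabs (f t' - f t) < e.
Proof.
  intros Hf [Ht0 Httb] He.
  destruct (Hf t ltac:(unfold inIbar; lra) e He) as [d [Hd Hfd]].
  exists (Rmin d (Rmin t (tb - t))). split; [repeat apply Rmin_glb_lt; lra|].
  intros t' [Htd [Ht0' Httb']%Rmin_Rgt_l]%Rmin_Rgt_l.
  assert (Ht' : inI tb t') by (apply Rabs_def2 in Ht0', Httb'; unfold inI; lra).
  split; auto. apply Hfd; auto. destruct Ht'; unfold inIbar; lra.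
Qed.

Lemma Dom_open tb g1 g2 : cont_on_Ibar tb g1 -> cont_on_Ibar tb g2 -> open_W (Dom tb g1 g2).
Proof.
  intros Hc1 Hc2 y t [Ht [Hy1 Hy2]].
  destruct (cont_on_Ibar_interior tb g1 t ((y - g1 t)/2) Hc1 Ht) as [d1 [Hd1 Hg1]]; [lra|].
  destruct (cont_on_Ibar_interior tb g2 t ((g2 t - y)/2) Hc2 Ht) as [d2 [Hd2 Hg2]]; [lra|].
  exists (Rmin (Rmin d1 d2) (Rmin ((y - g1 t)/2) ((g2 t - y)/2))).
  split; [repeat apply Rmin_glb_lt; lra|].
  intros y' t' Hd.
  pose proof (Rle_lt_trans _ _ _ (Rabs_y_le_dist2 y t y' t') Hd) as Hyy.
  pose proof (Rle_lt_trans _ _ _ (Rabs_t_le_dist2 y t y' t') Hd) as Htt.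
  rewrite Rabs_minus_sym in Hyy, Htt.
  apply Rmin_Rgt_l in Htt as [[Htt1 Htt2]%Rmin_Rgt_l _].
  apply Rmin_Rgt_l in Hyy as [_ [Hyy1 Hyy2]%Rmin_Rgt_l].
  destruct (Hg1 t' Htt1) as [Ht' Hg1t]. destruct (Hg2 t' Htt2) as [_ Hg2t].
  apply Rabs_def2 in Hyy1, Hyy2, Hg1t, Hg2t.
  split; [auto|lra].
Qed.

Lemma graph_g2_in_boundary tb g1 g2 s : 0 < tb -> cont_on_Ibar tb g2 ->
  (forall s, inI tb s -> g1 s < 0 < g2 s) -> inIbar tb s ->
  in_boundary (Dom tb g1 g2) (g2 s) s.
Proof.
  intros Htb Hc Hsign Hs. split.
  - intros eps Heps.
    destruct (cont_on_Ibar_approx tb g2 s (eps/3) Htb Hc Hs) as [s' [Hs' [Hss' Hgs']]]; [lra|].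
    destruct (Hsign s' Hs') as [Hg1 Hg2].
    set (eta := Rmin (g2 s' / 2) (eps / 4)).
    assert (Heta : 0 < eta <= g2 s' / 2 /\ eta <= eps / 4)
      by (split; [split; [apply Rmin_glb_lt; lra | apply Rmin_l] | apply Rmin_r]).
    exists (g2 s' - eta), s'. split; [split; [auto|lra]|].
    eapply Rle_lt_trans; [apply dist2_le_sum|].
    replace (g2 s - (g2 s' - eta)) with (eta + - (g2 s' - g2 s)) by ring.
    pose proof (Rabs_triang eta (- (g2 s' - g2 s))).
    rewrite Rabs_Ropp, (Rabs_pos_eq eta), (Rabs_minus_sym s) in * by lra. lra.
  - intros [e [He Hball]].
    assert (Hout : Dom tb g1 g2 (g2 s + e/2) s).
    { apply Hball. rewrite dist2_same_t. replace (g2 s - (g2 s + e/2)) with (-(e/2)) by ring.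
      rewrite Rabs_Ropp, Rabs_pos_eq; lra. }
    destruct Hout as [_ [_ Hlt]]. lra.
Qed.

Lemma cont_on_Ibar_phi2 tb g1 g2 phi : 0 < tb -> cont_on_Ibar tb g2 ->
  (forall s, inI tb s -> g1 s < 0 < g2 s) -> cont_on_boundary (Dom tb g1 g2) phi ->
  cont_on_Ibar tb (fun s => phi (g2 s) s).
Proof.
  intros Htb Hc Hsign Hphi s Hs eps Heps.
  destruct (Hphi (g2 s) s (graph_g2_in_boundary tb g1 g2 s Htb Hc Hsign Hs) eps Heps)
    as [del [Hdel Hphid]].
  destruct (Hc s Hs (del/2)) as [d [Hd Hgd]]; [lra|].
  exists (Rmin (del/2) d). split; [apply Rmin_glb_lt; lra|].
  intros s' Hs' [Hss' Hsd]%Rmin_Rgt_l.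
  apply Hphid; [apply graph_g2_in_boundary; auto|].
  eapply Rle_lt_trans; [apply dist2_le_sum|].
  pose proof (Hgd s' Hs' Hsd).
  rewrite (Rabs_minus_sym (g2 s)), (Rabs_minus_sym s). lra.
Qed.

Lemma lipschitz_continuity f K : 0 <= K ->
  (forall x x', Rabs (f x - f x') <= K * Rabs (x - x')) -> continuity f.
Proof.
  intros HK Hf x eps Heps. exists (eps / (K + 1)). split; [apply Rdiv_lt_0_compat; lra|].
  intros x' [_ Hx']. simpl in *. unfold R_dist in *.
  eapply Rle_lt_trans; [apply Hf|].
  apply Rle_lt_trans with (K * (eps / (K + 1))); [apply Rmult_le_compat_l; lra|].
  apply Rmult_lt_reg_r with (K + 1); [lra|].
  replace (K * (eps / (K + 1)) * (K + 1)) with (K * eps) by (field; lra). nra.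
Qed.

Lemma mul_div_succ_lt M x : 0 <= M -> 0 < x -> M * (x / (M + 1)) < x.
Proof.
  intros HM Hx. apply Rmult_lt_reg_r with (M + 1); [lra|].
  replace (M * (x / (M + 1)) * (M + 1)) with (M * x) by (field; lra). nra.
Qed.

Lemma IVT_lipschitz f a b K v : a < b -> 0 <= K ->
  (forall z z', a <= z <= b -> a <= z' <= b -> Rabs (f z - f z') <= K * Rabs (z - z')) ->
  f a < v < f b -> exists z, a <= z <= b /\ f z = v.
Proof.
  intros Hab HK Hf [Ha Hb].
  (* Clamping to [a, b] extends f continuously to R, as IVT requires. *)
  set (clamp := fun z => Rmax a (Rmin b z)).
  assert (Hclamp_in : forall z, a <= clamp z <= b)
    by (intros z; unfold clamp, Rmax, Rmin; repeat destruct Rle_dec; lra).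
  assert (Hclamp_id : forall z, a <= z <= b -> clamp z = z)
    by (intros z Hz; unfold clamp, Rmax, Rmin; repeat destruct Rle_dec; lra).
  assert (Hclamp_lip : forall z z', Rabs (clamp z - clamp z') <= Rabs (z - z')).
  { intros z z'. pose proof (Rle_abs (z - z')). pose proof (Rle_abs (-(z - z'))).
    rewrite Rabs_Ropp in *. unfold clamp, Rmax, Rmin. repeat destruct Rle_dec; apply Rabs_le; lra. }
  set (g := fun z => f (clamp z) - v).
  assert (Hg : continuity g).
  { apply (lipschitz_continuity g K HK). intros z z'. unfold g.
    replace (f (clamp z) - v - (f (clamp z') - v)) with (f (clamp z) - f (clamp z')) by ring.
    eapply Rle_trans; [apply Hf; auto|]. apply Rmult_le_compat_l; auto. }
  destruct (IVT g a b Hg Hab) as [z [Hz Hgz]]; unfold g; rewrite ?Hclamp_id by lra; try lra.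
  exists z. unfold g in Hgz. rewrite Hclamp_id in Hgz by lra. split; [auto | lra].
Qed.

Definition right_t (u : R -> R -> R) (y t : R) : R := t + 4 * y * u y t.

Definition right_dom (D : R -> R -> Prop) (u : R -> R -> R) (y tau : R) : Prop :=
  exists t, D y t /\ tau = right_t u y t.

(* Chosen by [epsilon], so meaningful only on [right_dom D u]; there the expansion hypothesis
   below makes it the inverse of [right_t u y]. *)
Definition left_t (D : R -> R -> Prop) (u : R -> R -> R) (y tau : R) : R :=
  epsilon (inhabits 0) (fun t => D y t /\ tau = right_t u y t).

Definition right_fun (D : R -> R -> Prop) (u : R -> R -> R) (y tau : R) : R :=
  u y (left_t D u y tau).

Section LeftToRightGraph.

Variables (D : R -> R -> Prop) (u : R -> R -> R) (L c : R).
Hypothesis HL : 0 <= L.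
Hypothesis Hu : forall y t y' t', D y t -> D y' t' -> Rabs (u y t - u y' t') <= L * dist2 y t y' t'.
Hypothesis HD : open_W D.
Hypothesis Hc : 0 < c.
Hypothesis Hexp : forall y t1 t2, D y t1 -> D y t2 -> t1 < t2 ->
  c * (t2 - t1) <= right_t u y t2 - right_t u y t1.

Lemma left_t_spec y tau : right_dom D u y tau ->
  D y (left_t D u y tau) /\ tau = right_t u y (left_t D u y tau).
Proof. exact (epsilon_spec (inhabits 0) (fun t => D y t /\ tau = right_t u y t)). Qed.

Lemma Rabs_right_t_sub_ge y t1 t2 : D y t1 -> D y t2 ->
  c * Rabs (t1 - t2) <= Rabs (right_t u y t1 - right_t u y t2).
Proof.
  intros H1 H2. destruct (Rtotal_order t1 t2) as [Hlt|[<-|Hgt]].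
  - pose proof (Hexp y t1 t2 H1 H2 Hlt).
    rewrite !Rabs_left by nra. lra.
  - rewrite !Rminus_diag, Rabs_R0. lra.
  - pose proof (Hexp y t2 t1 H2 H1 Hgt).
    rewrite !Rabs_pos_eq by nra. lra.
Qed.

Lemma left_t_right_t y t : D y t -> left_t D u y (right_t u y t) = t.
Proof.
  intros Ht. destruct (left_t_spec y (right_t u y t)) as [Ht' Heq]; [exists t; auto|].
  pose proof (Rabs_right_t_sub_ge y _ _ Ht Ht') as Hinj.
  rewrite <- Heq, Rminus_diag, Rabs_R0 in Hinj.
  assert (Rabs (t - left_t D u y (right_t u y t)) <= 0) as Habs%Rabs_le_inv by nra. lra.
Qed.

Lemma right_t_lip_in_ball y0 t0 rho : 0 < rho -> D y0 t0 ->
  (forall y t, dist2 y0 t0 y t < rho -> D y t) ->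
  exists M, 0 <= M /\ forall y t y' t', dist2 y0 t0 y t < rho -> dist2 y0 t0 y' t' < rho ->
    Rabs (right_t u y t - right_t u y' t') <= M * (Rabs (y - y') + Rabs (t - t')).
Proof.
  intros Hrho H0 Hball.
  set (Y := Rabs y0 + rho). set (B := Rabs (u y0 t0) + L * rho).
  assert (Hbound : forall y t, dist2 y0 t0 y t < rho -> Rabs y <= Y /\ Rabs (u y t) <= B).
  { intros y t Hd. split.
    - pose proof (Rabs_y_le_dist2 y0 t0 y t). pose proof (Rabs_triang_inv y y0).
      rewrite (Rabs_minus_sym y0) in *. unfold Y. lra.
    - pose proof (Hu y t y0 t0 (Hball y t Hd) H0) as Hu0. rewrite dist2_sym in Hu0.
      pose proof (Rabs_triang_inv (u y t) (u y0 t0)).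
      assert (L * dist2 y0 t0 y t <= L * rho) by (apply Rmult_le_compat_l; lra). unfold B. lra. }
  assert (HYB : 0 <= Y /\ 0 <= B).
  { unfold Y, B. pose proof (Rabs_pos y0). pose proof (Rabs_pos (u y0 t0)). split; nra. }
  exists (1 + 4 * Y * L + 4 * B). split; [nra|].
  intros y t y' t' Hd Hd'.
  destruct (Hbound y t Hd) as [Hy _]. destruct (Hbound y' t' Hd') as [_ Hu'].
  pose proof (Hu y t y' t' (Hball y t Hd) (Hball y' t' Hd')) as Huu.
  pose proof (dist2_le_sum y t y' t').
  unfold right_t.
  replace (t + 4 * y * u y t - (t' + 4 * y' * u y' t'))
    with ((t - t') + 4 * y * (u y t - u y' t') + 4 * (y - y') * u y' t') by ring.
  eapply Rle_trans; [apply Rabs_triang3|]. rewrite !Rabs_mult, (Rabs_pos_eq 4) by lra.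
  assert (Rabs y * Rabs (u y t - u y' t') <= Y * (L * (Rabs (y - y') + Rabs (t - t')))).
  { apply Rmult_le_compat; try apply Rabs_pos; auto.
    eapply Rle_trans; [exact Huu|]. apply Rmult_le_compat_l; auto. }
  assert (Rabs (y - y') * Rabs (u y' t') <= Rabs (y - y') * B)
    by (apply Rmult_le_compat_l; [apply Rabs_pos | auto]).
  pose proof (Rabs_pos (y - y')). pose proof (Rabs_pos (t - t')). nra.
Qed.

Lemma right_dom_open : open_W (right_dom D u).
Proof.
  intros y0 tau0 [t0 [H0 Htau0]].
  destruct (HD y0 t0 H0) as [rho [Hrho Hball]].
  destruct (right_t_lip_in_ball y0 t0 rho Hrho H0 Hball) as [M [HM HFM]].
  set (tm := t0 - rho/2). set (tp := t0 + rho/2).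
  assert (Hseg : forall y z, Rabs (y0 - y) < rho/4 -> tm <= z <= tp -> dist2 y0 t0 y z < rho).
  { intros y z Hy Hz. eapply Rle_lt_trans; [apply dist2_le_sum|].
    assert (Rabs (t0 - z) <= rho/2) by (apply Rabs_le; unfold tm, tp in Hz; lra). lra. }
  assert (Hy00 : Rabs (y0 - y0) < rho/4) by (rewrite Rminus_diag, Rabs_R0; lra).
  assert (Hgap : c * (rho/2) <= right_t u y0 tp - tau0 /\ c * (rho/2) <= tau0 - right_t u y0 tm).
  { rewrite Htau0. split.
    - replace (rho/2) with (tp - t0) by (unfold tp; ring).
      apply Hexp; [auto | apply Hball, Hseg; unfold tm, tp; auto; lra | unfold tp; lra].
    - replace (rho/2) with (t0 - tm) by (unfold tm; ring).
      apply Hexp; [apply Hball, Hseg; unfold tm, tp; auto; lra | auto | unfold tm; lra]. }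
  set (del := Rmin (rho/4) (c * rho / 4 / (M + 1))).
  assert (Hdel : 0 < del /\ del <= rho/4 /\ M * del < c * rho / 4).
  { split; [|split]; [apply Rmin_glb_lt; [lra | apply Rdiv_lt_0_compat; nra] | apply Rmin_l|].
    eapply Rle_lt_trans; [apply Rmult_le_compat_l; [auto | apply Rmin_r]|].
    apply mul_div_succ_lt; nra. }
  exists (Rmin del (c * rho / 4)). split; [apply Rmin_glb_lt; nra|].
  intros y tau [Hdy Hdtau]%Rmin_Rgt_l.
  pose proof (Rle_lt_trans _ _ _ (Rabs_y_le_dist2 y0 tau0 y tau) Hdy) as Hy.
  pose proof (Rle_lt_trans _ _ _ (Rabs_t_le_dist2 y0 tau0 y tau) Hdtau) as Htau.
  assert (Hclose : forall z, tm <= z <= tp -> D y z /\ Rabs (right_t u y z - right_t u y0 z) < c * rho / 4).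
  { intros z Hz. split; [apply Hball, Hseg; auto; lra|].
    eapply Rle_lt_trans; [apply HFM; apply Hseg; auto; lra|].
    rewrite Rminus_diag, Rabs_R0, Rplus_0_r, Rabs_minus_sym.
    assert (M * Rabs (y0 - y) <= M * del) by (apply Rmult_le_compat_l; lra). lra. }
  assert (Htmp : tm < tp) by (unfold tm, tp; lra).
  destruct (IVT_lipschitz (right_t u y) tm tp M tau) as [z [Hz Htz]]; auto.
  - intros z z' Hz Hz'. eapply Rle_trans; [apply HFM; apply Hseg; auto; lra|].
    rewrite Rminus_diag, Rabs_R0, Rplus_0_l. lra.
  - destruct (Hclose tm) as [_ Hm]; [lra|]. destruct (Hclose tp) as [_ Hp]; [lra|].
    apply Rabs_def2 in Hm, Hp, Htau. lra.
  - exists z. split; [apply Hclose; auto | auto].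
Qed.

Lemma Rabs_left_t_sub_le y0 t0 rho M y tau y' t' :
  (forall y t, dist2 y0 t0 y t < rho -> D y t) ->
  (forall y t y' t', dist2 y0 t0 y t < rho -> dist2 y0 t0 y' t' < rho ->
     Rabs (right_t u y t - right_t u y' t') <= M * (Rabs (y - y') + Rabs (t - t'))) ->
  right_dom D u y tau -> dist2 y0 t0 y t' < rho -> dist2 y0 t0 y' t' < rho ->
  c * Rabs (left_t D u y tau - t') <= Rabs (tau - right_t u y' t') + M * Rabs (y - y').
Proof.
  intros Hball HFM Hyt Hyt' Hy't'.
  destruct (left_t_spec y tau Hyt) as [Ht Htau].
  pose proof (Rabs_right_t_sub_ge y _ t' Ht (Hball y t' Hyt')) as Hexp'.
  rewrite <- Htau in Hexp'.
  pose proof (HFM y' t' y t' Hy't' Hyt') as HF.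
  rewrite Rminus_diag, Rabs_R0, Rplus_0_r, (Rabs_minus_sym y') in HF.
  pose proof (Rabs_triang (tau - right_t u y' t') (right_t u y' t' - right_t u y t')).
  replace (tau - right_t u y' t' + (right_t u y' t' - right_t u y t'))
    with (tau - right_t u y t') in * by ring.
  lra.
Qed.

Lemma right_fun_lip_loc : lip_loc (right_dom D u) (right_fun D u).
Proof.
  intros y0 tau0 [t0 [H0 Htau0]].
  destruct (HD y0 t0 H0) as [rho [Hrho Hball]].
  destruct (right_t_lip_in_ball y0 t0 rho Hrho H0 Hball) as [M [HM HFM]].
  set (r := Rmin (rho/4) (c * rho / 4 / (M + 1))).
  assert (Hr : 0 < r /\ r <= rho/4 /\ (M + 1) * r <= c * rho / 4).
  { split; [|split]; [apply Rmin_glb_lt; [lra | apply Rdiv_lt_0_compat; nra] | apply Rmin_l|].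
    apply Rle_trans with ((M + 1) * (c * rho / 4 / (M + 1)));
      [apply Rmult_le_compat_l; [lra | apply Rmin_r] | right; field; lra]. }
  assert (Hnear : forall y tau, right_dom D u y tau -> dist2 y0 tau0 y tau < r ->
            Rabs (y0 - y) < rho/4 /\ Rabs (t0 - left_t D u y tau) <= rho/4).
  { intros y tau Hyt Hd.
    pose proof (Rle_lt_trans _ _ _ (Rabs_y_le_dist2 y0 tau0 y tau) Hd) as Hy.
    pose proof (Rle_lt_trans _ _ _ (Rabs_t_le_dist2 y0 tau0 y tau) Hd) as Htau.
    split; [lra|].
    assert (Hyt0 : dist2 y0 t0 y t0 < rho) by (rewrite dist2_same_t; lra).
    assert (Hy0t0 : dist2 y0 t0 y0 t0 < rho) by (rewrite dist2_same_t, Rminus_diag, Rabs_R0; lra).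
    pose proof (Rabs_left_t_sub_le y0 t0 rho M y tau y0 t0 Hball HFM Hyt Hyt0 Hy0t0) as Hlt.
    rewrite <- Htau0, (Rabs_minus_sym (left_t D u y tau)), (Rabs_minus_sym tau),
      (Rabs_minus_sym y) in Hlt.
    assert (M * Rabs (y0 - y) <= M * r) by (apply Rmult_le_compat_l; lra).
    apply Rmult_le_reg_l with c; [auto | lra]. }
  exists r, (L * (1 + (1 + M) / c)). split; [lra|].
  intros y tau y' tau' Hyt Hyt' Hd Hd'.
  destruct (Hnear y tau Hyt Hd) as [Hy Ht]. destruct (Hnear y' tau' Hyt' Hd') as [Hy' Ht'].
  destruct (left_t_spec y tau Hyt) as [HDt _]. destruct (left_t_spec y' tau' Hyt') as [HDt' Htau'].
  unfold right_fun. set (t := left_t D u y tau) in *. set (t' := left_t D u y' tau') in *.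
  set (d := dist2 y tau y' tau').
  assert (Hyt'b : dist2 y0 t0 y t' < rho) by (eapply Rle_lt_trans; [apply dist2_le_sum | lra]).
  assert (Hy't'b : dist2 y0 t0 y' t' < rho) by (eapply Rle_lt_trans; [apply dist2_le_sum | lra]).
  assert (Hdy : Rabs (y - y') <= d) by apply Rabs_y_le_dist2.
  assert (Hdtau : Rabs (tau - tau') <= d) by apply Rabs_t_le_dist2.
  assert (Htt : Rabs (t - t') <= (1 + M) / c * d).
  { pose proof (Rabs_left_t_sub_le y0 t0 rho M y tau y' t' Hball HFM Hyt Hyt'b Hy't'b) as Hlt.
    rewrite <- Htau' in Hlt. fold t in Hlt.
    assert (M * Rabs (y - y') <= M * d) by (apply Rmult_le_compat_l; lra).
    apply Rmult_le_reg_l with c; [auto|].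
    replace (c * ((1 + M) / c * d)) with ((1 + M) * d) by (field; lra). lra. }
  eapply Rle_trans; [apply Hu; auto|].
  eapply Rle_trans; [apply Rmult_le_compat_l; [auto | apply dist2_le_sum]|].
  rewrite Rmult_assoc. apply Rmult_le_compat_l; [auto | lra].
Qed.

Lemma S_left_eq_S_right q : S_left D u q <-> S_right (right_dom D u) (right_fun D u) q.
Proof.
  split.
  - intros [y [t [Ht ->]]]. exists y, (right_t u y t).
    split; [exists t; auto|].
    unfold right_fun. rewrite left_t_right_t by auto. unfold right_t. f_equal. ring.
  - intros [y [tau [Hyt ->]]]. destruct (left_t_spec y tau Hyt) as [Ht Htau].
    exists y, (left_t D u y tau). split; [auto|].
    unfold right_fun. set (t := left_t D u y tau) in *. rewrite Htau. unfold right_t. f_equal. ring.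
Qed.

End LeftToRightGraph.

Lemma left_graph_is_right_graph D u c : open_W D -> lip_on D u -> 0 < c ->
  (forall y t1 t2, D y t1 -> D y t2 -> t1 < t2 -> c * (t2 - t1) <= right_t u y t2 - right_t u y t1) ->
  exists (Dr : R -> R -> Prop) (ur : R -> R -> R),
    open_W Dr /\ lip_loc Dr ur /\ (forall q, S_left D u q <-> S_right Dr ur q).
Proof.
  intros HD [L HL] Hc Hexp.
  assert (HL' : forall y t y' t', D y t -> D y' t' -> Rabs (u y t - u y' t') <= Rmax L 0 * dist2 y t y' t').
  { intros y t y' t' Ht Ht'. eapply Rle_trans; [apply HL; auto|].
    apply Rmult_le_compat_r; [apply dist2_ge0 | apply Rmax_l]. }
  exists (right_dom D u), (right_fun D u). split; [|split].
  - apply (right_dom_open D u (Rmax L 0) c); auto. apply Rmax_r.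
  - apply (right_fun_lip_loc D u (Rmax L 0) c); auto. apply Rmax_r.
  - intros q. apply (S_left_eq_S_right D u c); auto.
Qed.

(* The fourth hypothesis is p_2(l) - p_1(s) in H_{p_1(s)}, i.e. l = lambda(s). *)
Lemma ruling_equations t y U s l h G1 G2 P1 P2 :
  U = (1 - h) * P1 + h * P2 -> y = (1 - h) * G1 + h * G2 ->
  t + 2 * y * U = (1 - h) * (s + 2 * G1 * P1) + h * (l + 2 * G2 * P2) ->
  l + 2 * G2 * P2 - (s + 2 * G1 * P1) = 2 * G1 * (P2 - P1) - 2 * P1 * (G2 - G1) ->
  t = s - 2 * (y - G1) * (P1 + U) /\ t = l - 2 * (y - G2) * (P2 + U) /\
  l - s = -2 * (G2 - G1) * (P2 + P1).
Proof.
  intros -> -> Ht Hl.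
  assert (Hl' : l = s + 2 * G1 * (P2 - P1) - 2 * P1 * (G2 - G1) - 2 * G2 * P2 + 2 * G1 * P1) by lra.
  subst l.
  assert (Ht' : t = (1 - h) * (s + 2 * G1 * P1)
      + h * ((s + 2 * G1 * (P2 - P1) - 2 * P1 * (G2 - G1) - 2 * G2 * P2 + 2 * G1 * P1) + 2 * G2 * P2)
      - 2 * ((1 - h) * G1 + h * G2) * ((1 - h) * P1 + h * P2)) by lra.
  subst t. split; [|split]; ring.
Qed.

Lemma ruled_decomposition tb g1 g2 phi u y t :
  (forall q, S_left (Dom tb g1 g2) u q <-> R_phi tb g1 g2 phi q) -> Dom tb g1 g2 y t ->
  exists s l h, inI tb s /\ inIbar tb l /\ 0 < h < 1 /\
    u y t = (1 - h) * phi (g1 s) s + h * phi (g2 l) l /\ y = (1 - h) * g1 s + h * g2 l /\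
    t = s - 2 * (y - g1 s) * (phi (g1 s) s + u y t) /\
    t = l - 2 * (y - g2 l) * (phi (g2 l) l + u y t) /\
    l - s = -2 * (g2 l - g1 s) * (phi (g2 l) l + phi (g1 s) s).
Proof.
  intros Hrep Hyt.
  assert (HS : S_left (Dom tb g1 g2) u (u y t, y, t + 2 * y * u y t)) by (exists y, t; auto).
  apply Hrep in HS as (h & s & l & Hh & Hs & [Hl Hlam] & Hq).
  unfold comb3, p_i in Hq. injection Hq as Hu Hy Ht.
  unfold in_Hp, sub3, p_i in Hlam.
  exists s, l, h. do 5 (split; auto).
  apply ruling_equations with h; auto.
Qed.

Lemma Rabs_bilinear_le A X B Y ng np lg lp d :
  Rabs A <= 2 * ng -> Rabs X <= lp * d -> Rabs B <= lg * d -> Rabs Y <= 2 * np ->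
  Rabs (2 * A * X + 2 * B * Y) <= 4 * (ng * lp + np * lg) * d.
Proof.
  intros HA HX HB HY. eapply Rle_trans; [apply Rabs_triang|].
  rewrite !Rabs_mult, Rabs_pos_eq by lra.
  assert (Rabs A * Rabs X <= 2 * ng * (lp * d)) by (apply Rmult_le_compat; auto; apply Rabs_pos).
  assert (Rabs B * Rabs Y <= lg * d * (2 * np)) by (apply Rmult_le_compat; auto; apply Rabs_pos).
  nra.
Qed.

(* Applied with a = y - gamma_1(s_2), b = gamma_2(lambda_2) - y and ds, dl, dt, du the variations
   of s, lambda, t and u between two points of a slice y = const: the three hypotheses are the
   ruling equations, up to the errors controlled by zeta. *)
Lemma expansion_of_perturbed_increments a b y ds dl dt du k :
  0 < a -> 0 < b -> -b <= y <= a -> k <= 1/25 ->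
  Rabs (dt - ds + 2 * a * du) <= k * Rabs ds ->
  Rabs (dt - dl - 2 * b * du) <= k * Rabs dl ->
  Rabs (dl - ds) <= k * (Rabs ds + Rabs dl) ->
  0 < dt -> dt / 2 <= dt + 4 * y * du.
Proof.
  intros Ha Hb Hy Hk E1 E2 E3 Hdt.
  assert (Hsum : (a + b) * dt = b * ds + a * dl + b * (dt - ds + 2 * a * du) + a * (dt - dl - 2 * b * du))
    by ring.
  assert (Hdu : 2 * (a + b) * du = (ds - dl) + (dt - ds + 2 * a * du) - (dt - dl - 2 * b * du)) by ring.
  set (e1 := dt - ds + 2 * a * du) in *. set (e2 := dt - dl - 2 * b * du) in *.
  assert (Hpos : 0 < ds /\ 0 < dl).
  { destruct (Rle_or_lt ds 0) as [Hds|Hds], (Rle_or_lt dl 0) as [Hdl|Hdl].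
    all: rewrite ?(Rabs_left1 ds), ?(Rabs_left1 dl), ?(Rabs_pos_eq ds), ?(Rabs_pos_eq dl) in * by lra.
    all: apply Rabs_le_inv in E1, E2, E3; try lra.
    all: exfalso.
    - assert (b * e1 <= b * (k * - ds)) by (apply Rmult_le_compat_l; lra).
      assert (a * e2 <= a * (k * - dl)) by (apply Rmult_le_compat_l; lra).
      assert (b * ds <= 0 /\ a * dl <= 0) as [] by (split; nra).
      assert (0 < (a + b) * dt) by nra.
      nra.
    - nra.
    - nra. }
  destruct Hpos as [Hds Hdl].
  rewrite (Rabs_pos_eq ds), (Rabs_pos_eq dl) in * by lra.
  assert (k * ds <= ds / 25 /\ k * dl <= dl / 25) as [Kds Kdl] by (split; nra).
  apply Rabs_le_inv in E1, E2, E3.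
  assert (Hw : - (2 * (ds + dl) / 25) <= 2 * (a + b) * du <= 2 * (ds + dl) / 25) by lra.
  assert (Hdt' : 24 * (b * ds + a * dl) <= 25 * ((a + b) * dt)) by nra.
  assert (Hcmp : ds <= 2 * dl /\ dl <= 2 * ds) by lra.
  assert (0 <= (a + b) * (dt + 4 * y * du - dt / 2)); [|nra].
  replace ((a + b) * (dt + 4 * y * du - dt / 2)) with ((a + b) * dt / 2 + 2 * y * (2 * (a + b) * du))
    by field.
  destruct (Rle_or_lt 0 y); nra.
Qed.

Section RuledSlices.

Variables (tb : R) (g1 g2 : R -> R) (phi u : R -> R -> R) (ng np lg lp : R).
Hypothesis Hsign : forall s, inI tb s -> g1 s < 0 < g2 s.
Hypothesis Hg2_ge0 : forall s, inIbar tb s -> 0 <= g2 s.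
Hypothesis Hg1_sup : forall s, inI tb s -> Rabs (g1 s) <= ng.
Hypothesis Hg2_sup : forall s, inIbar tb s -> Rabs (g2 s) <= ng.
Hypothesis Hphi1_sup : forall s, inI tb s -> Rabs (phi (g1 s) s) <= np.
Hypothesis Hphi2_sup : forall s, inIbar tb s -> Rabs (phi (g2 s) s) <= np.
Hypothesis Hg1_lip : forall s s', inI tb s -> inI tb s' -> Rabs (g1 s - g1 s') <= lg * Rabs (s - s').
Hypothesis Hg2_lip : forall s s', inIbar tb s -> inIbar tb s' ->
  Rabs (g2 s - g2 s') <= lg * Rabs (s - s').
Hypothesis Hphi1_lip : forall s s', inI tb s -> inI tb s' ->
  Rabs (phi (g1 s) s - phi (g1 s') s') <= lp * Rabs (s - s').
Hypothesis Hphi2_lip : forall s s', inIbar tb s -> inIbar tb s' ->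
  Rabs (phi (g2 s) s - phi (g2 s') s') <= lp * Rabs (s - s').
Hypothesis Hsmall : 4 * (ng * lp + np * lg) <= 1/25.
Hypothesis Hrep : forall q, S_left (Dom tb g1 g2) u q <-> R_phi tb g1 g2 phi q.

Lemma right_t_expanding_on_ruled y t1 t2 : Dom tb g1 g2 y t1 -> Dom tb g1 g2 y t2 -> t1 < t2 ->
  1/2 * (t2 - t1) <= right_t u y t2 - right_t u y t1.
Proof.
  intros Hyt1 Hyt2 Ht.
  destruct (ruled_decomposition tb g1 g2 phi u y t1 Hrep Hyt1)
    as (s1 & l1 & h1 & Hs1 & Hl1 & Hh1 & Hu1 & _ & Hts1 & Htl1 & Hls1).
  destruct (ruled_decomposition tb g1 g2 phi u y t2 Hrep Hyt2)
    as (s2 & l2 & h2 & Hs2 & Hl2 & Hh2 & _ & Hy2 & Hts2 & Htl2 & Hls2).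
  pose proof (Hsign s2 Hs2) as [Hg1s2 _]. pose proof (Hg2_ge0 l2 Hl2).
  assert (Hy : g1 s2 < y < g2 l2) by (rewrite Hy2; split; nra).
  pose proof (Hg1_sup s2 Hs2) as Hng1%Rabs_le_inv. pose proof (Hg2_sup l2 Hl2) as Hng2%Rabs_le_inv.
  assert (Hu1b : Rabs (u y t1) <= np).
  { rewrite Hu1. eapply Rle_trans; [apply Rabs_triang|].
    rewrite !Rabs_mult, (Rabs_pos_eq (1 - h1)), (Rabs_pos_eq h1) by lra.
    pose proof (Hphi1_sup s1 Hs1). pose proof (Hphi2_sup l1 Hl1). nra. }
  assert (Hsum2 : forall A B, Rabs A <= np -> Rabs B <= np -> Rabs (A + B) <= 2 * np)
    by (intros A B HA HB; pose proof (Rabs_triang A B); lra).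
  enough ((t2 - t1) / 2 <= (t2 - t1) + 4 * y * (u y t2 - u y t1)) by (unfold right_t; lra).
  apply (expansion_of_perturbed_increments (y - g1 s2) (g2 l2 - y) y (s2 - s1) (l2 - l1) (t2 - t1)
           (u y t2 - u y t1) (4 * (ng * lp + np * lg))); try lra.
  - replace (t2 - t1 - (s2 - s1) + 2 * (y - g1 s2) * (u y t2 - u y t1))
      with (2 * (- (y - g1 s2)) * (phi (g1 s2) s2 - phi (g1 s1) s1)
            + 2 * (g1 s2 - g1 s1) * (phi (g1 s1) s1 + u y t1)) by lra.
    apply Rabs_bilinear_le; auto. rewrite Rabs_Ropp, Rabs_pos_eq; lra.
  - replace (t2 - t1 - (l2 - l1) - 2 * (g2 l2 - y) * (u y t2 - u y t1))
      with (2 * (g2 l2 - y) * (phi (g2 l2) l2 - phi (g2 l1) l1)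
            + 2 * (g2 l2 - g2 l1) * (phi (g2 l1) l1 + u y t1)) by lra.
    apply Rabs_bilinear_le; auto. rewrite Rabs_pos_eq; lra.
  - replace (l2 - l1 - (s2 - s1))
      with (2 * (- (g2 l2 - g1 s2)) * ((phi (g2 l2) l2 - phi (g2 l1) l1) + (phi (g1 s2) s2 - phi (g1 s1) s1))
            + 2 * (- ((g2 l2 - g2 l1) - (g1 s2 - g1 s1))) * (phi (g2 l1) l1 + phi (g1 s1) s1))
      by lra.
    apply Rabs_bilinear_le; auto.
    + rewrite Rabs_Ropp. apply Rabs_le. lra.
    + eapply Rle_trans; [apply Rabs_triang|].
      rewrite (Rabs_minus_sym (phi (g2 l2) l2)), (Rabs_minus_sym (phi (g1 s2) s2)).
      pose proof (Hphi2_lip l1 l2 Hl1 Hl2). pose proof (Hphi1_lip s1 s2 Hs1 Hs2).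
      rewrite (Rabs_minus_sym l1), (Rabs_minus_sym s1) in *. lra.
    + rewrite Rabs_Ropp. unfold Rminus at 1. eapply Rle_trans; [apply Rabs_triang|].
      rewrite Rabs_Ropp, (Rabs_minus_sym (g2 l2)), (Rabs_minus_sym (g1 s2)).
      pose proof (Hg2_lip l1 l2 Hl1 Hl2). pose proof (Hg1_lip s1 s2 Hs1 Hs2).
      rewrite (Rabs_minus_sym l1), (Rabs_minus_sym s1) in *. lra.
Qed.

End RuledSlices.

Lemma right_t_expanding_of_zeta tb g1 g2 phi u c :
  0 < tb -> cont_on_Ibar tb g2 -> (forall s, inI tb s -> g1 s < 0 < g2 s) ->
  g2 0 = 0 -> g2 tb = 0 -> cont_on_boundary (Dom tb g1 g2) phi ->
  zeta_lt tb g1 g2 phi c -> c <= 1/25 ->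
  (forall q, S_left (Dom tb g1 g2) u q <-> R_phi tb g1 g2 phi q) ->
  forall y t1 t2, Dom tb g1 g2 y t1 -> Dom tb g1 g2 y t2 -> t1 < t2 ->
    1/2 * (t2 - t1) <= right_t u y t2 - right_t u y t1.
Proof.
  intros Htb Hc2 Hsign Hg20 Hg2tb Hphi Hz Hc Hrep.
  destruct Hz as (ng1 & ng2 & lg1 & lg2 & np1 & np2 & lp1 & lp2 &
                  Sg1 & Sg2 & Lg1 & Lg2 & Sp1 & Sp2 & Lp1 & Lp2 & Hzeta).
  pose proof (cont_on_Ibar_phi2 tb g1 g2 phi Htb Hc2 Hsign Hphi) as Hc2'.
  pose proof (Rmax_l ng1 ng2). pose proof (Rmax_r ng1 ng2).
  pose proof (Rmax_l np1 np2). pose proof (Rmax_r np1 np2).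
  pose proof (Rmax_l lg1 lg2). pose proof (Rmax_r lg1 lg2).
  pose proof (Rmax_l lp1 lp2). pose proof (Rmax_r lp1 lp2).
  pose proof (supnorm_ge0 _ _ _ Htb Sg1). pose proof (supnorm_ge0 _ _ _ Htb Sp1).
  pose proof (lipconst_ge0 _ _ _ Htb Lg2). pose proof (lipconst_ge0 _ _ _ Htb Lp2).
  apply (right_t_expanding_on_ruled tb g1 g2 phi u (Rmax ng1 ng2) (Rmax np1 np2)
           (Rmax lg1 lg2) (Rmax lp1 lp2)); auto.
  - intros s [[Hs0|Hs0] [Hstb|Hstb]]; subst; try lra. left. apply Hsign. split; auto.
  - apply (supnorm_le tb g1 ng1); auto.
  - apply cont_bound_closure; auto. apply (supnorm_le tb g2 ng2); auto.
  - apply (supnorm_le tb _ np1); auto.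
  - apply cont_bound_closure; auto. apply (supnorm_le tb _ np2); auto.
  - apply (lipconst_le tb g1 lg1); auto.
  - apply cont_lip_closure; auto; [lra|]. apply (lipconst_le tb g2 lg2); auto.
  - apply (lipconst_le tb _ lp1); auto.
  - apply cont_lip_closure; auto; [lra|]. apply (lipconst_le tb _ lp2); auto.
  - nra.
Qed.

Lemma sqrt721_bound : (sqrt 721 - 25) / 48 < 1/25.
Proof.
  pose proof (sqrt_sqrt 721 ltac:(lra)). pose proof (sqrt_pos 721).
  assert (sqrt 721 < 26.92) by nra. lra.
Qed.

Theorem proposition1p2 (tb : R) (g1 g2 : R -> R) (phi u : R -> R -> R) :
  0 < tb ->
  lip_on_I tb g1 -> lip_on_I tb g2 ->
  cont_on_Ibar tb g1 -> cont_on_Ibar tb g2 ->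
  (forall s, inI tb s -> g1 s < 0 < g2 s) ->
  g1 0 = 0 -> g1 tb = 0 -> g2 0 = 0 -> g2 tb = 0 ->
  convex_on_Ibar tb g1 -> concave_on_Ibar tb g2 ->
  cont_on_boundary (Dom tb g1 g2) phi ->
  lip_on_I tb (fun s => phi (g1 s) s) -> lip_on_I tb (fun s => phi (g2 s) s) ->
  zeta_lt tb g1 g2 phi ((sqrt 721 - 25) / 48) ->
  lip_on (Dom tb g1 g2) u ->
  boundary_values (Dom tb g1 g2) u phi ->
  (forall q, S_left (Dom tb g1 g2) u q <-> R_phi tb g1 g2 phi q) ->
  exists (Dr : R -> R -> Prop) (ur : R -> R -> R),
    open_W Dr /\ lip_loc Dr ur /\
    (forall q, S_left (Dom tb g1 g2) u q <-> S_right Dr ur q).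
Proof.
  (* Convexity, the Lip(I) assumptions and the boundary values are not needed: zeta already
     bounds the Lipschitz constants, and only the sign of gamma_2 on the closed interval is used. *)
  intros Htb _ _ Hc1 Hc2 Hsign _ _ Hg20 Hg2tb _ _ Hphi _ _ Hz Hu _ Hrep.
  apply (left_graph_is_right_graph _ _ (1/2)).
  - apply Dom_open; auto.
  - exact Hu.
  - lra.
  - apply (right_t_expanding_of_zeta tb g1 g2 phi u ((sqrt 721 - 25) / 48)); auto.
    left. apply sqrt721_bound.
Qed.
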